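(* Let $f\colon E\to\mathbb{R}$ be smooth and let $Z$ be the vector field along $E$ with components $Z^\mu=g^{\mu\nu}\partial f/\partial y^\nu$. Then \[ \nabla^{HC}\cdot Z=g^{\mu\nu}\Big(\frac{\delta}{\delta x^\mu}\frac{\partial f}{\partial y^\nu}-\Gamma^\alpha_{\nu\mu}\frac{\partial f}{\partial y^\alpha}\Big)=\frac{\partial}{\partial y^\nu}\Big(g^{\nu\mu}\frac{\delta f}{\delta x^\mu}\Big)+2I^\mu\frac{\delta f}{\delta x^\mu}+J^\alpha\frac{\partial f}{\partial y^\alpha}, \] where $I^\mu=g^{\mu\nu}I_\nu$ and $J^\alpha=g^{\alpha\beta}J_\beta$.
   Context: $M$ smooth $n$-manifold, $E=TM\setminus0$, induced coordinates $\{x^\mu,y^\mu\}$. $\mathscr{L}\colon E\to\mathbb{R}$ smooth, positively homogeneous of degree two in $y$, with non-degenerate $g_{\mu\nu}=\partial^2\mathscr{L}/\partial y^\mu\partial y^\nu$, inverse $g^{\mu\nu}$. $C_{\alpha\beta\gamma}=\tfrac12\partial g_{\beta\gamma}/\partial y^\alpha$, $I_\gamma=g^{\alpha\beta}C_{\alpha\beta\gamma}$. Spray $2G^\alpha=g^{\alpha\delta}\big(\frac{\partial^2\mathscr{L}}{\partial x^\gamma\partial y^\delta}y^\gamma-\frac{\partial\mathscr{L}}{\partial x^\delta}\big)$, $N^\alpha_\mu=G^\alpha_\mu=\partial G^\alpha/\partial y^\mu$, Berwald coefficients $G^\alpha_{\mu\nu}=\partial G^\alpha_\mu/\partial y^\nu$,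 $\frac{\delta}{\delta x^\mu}=\frac{\partial}{\partial x^\mu}-N^\nu_\mu\frac{\partial}{\partial y^\nu}$, $\Gamma^\alpha_{\beta\gamma}=\tfrac12 g^{\alpha\sigma}\big(\frac{\delta g_{\sigma\gamma}}{\delta x^\beta}+\frac{\delta g_{\sigma\beta}}{\delta x^\gamma}-\frac{\delta g_{\beta\gamma}}{\delta x^\sigma}\big)$. Landsberg tensor $L^\alpha_{\beta\gamma}=G^\alpha_{\beta\gamma}-\Gamma^\alpha_{\beta\gamma}$, and $J_\alpha=L^\mu_{\alpha\mu}$. $(\nabla^{HC}_\alpha Z)^\beta=\frac{\delta Z^\beta}{\delta x^\alpha}+\Gamma^\beta_{\mu\alpha}Z^\mu$, $\nabla^{HC}\cdot Z=(\nabla^{HC}_\alpha Z)^\alpha$. *)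

From mathcomp Require Import ssreflect ssrfun ssrbool eqtype ssrnat seq fintype.
From Stdlib Require Import Reals ClassicalEpsilon.
Set Implicit Arguments.
Unset Strict Implicit.
Local Open Scope R_scope.

(* Local coordinates (x^mu, y^mu) on E = TM \ 0 over a chart domain U of M:
   a point of E is a pair (x, y) of coordinate vectors 'I_n -> R.
   A function on E is  F : ('I_n -> R) -> ('I_n -> R) -> R. *)
Definition Fn (n : nat) := ('I_n -> R) -> ('I_n -> R) -> R.

Definition sumI (n : nat) (F : 'I_n -> R) : R := foldr Rplus 0 (map F (enum 'I_n)).

Definition upd (n : nat) (v : 'I_n -> R) (mu : 'I_n) (t : R) : 'I_n -> R :=
  fun i => if i == mu then v i + t else v i.

(* partial derivative value (chosen by epsilon; meaningful where it exists) *)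
Definition deriv_at (h : R -> R) : R :=
  epsilon (inhabits 0) (fun l => derivable_pt_lim h 0 l).

Definition Dx (n : nat) (mu : 'I_n) (F : Fn n) : Fn n :=
  fun x y => deriv_at (fun t => F (upd x mu t) y).
Definition Dy (n : nat) (mu : 'I_n) (F : Fn n) : Fn n :=
  fun x y => deriv_at (fun t => F x (upd y mu t)).

Fixpoint iterD (n : nat) (ds : seq (bool * 'I_n)) (F : Fn n) : Fn n :=
  match ds with
  | [::] => F
  | (b, mu) :: ds' => (if b then Dy mu else Dx mu) (iterD ds' F)
  end.

Definition onE (n : nat) (U : ('I_n -> R) -> Prop) (x y : 'I_n -> R) : Prop :=
  U x /\ exists i, y i <> 0.

Definition chart_open (n : nat) (U : ('I_n -> R) -> Prop) : Prop :=
  forall x, U x -> exists d, 0 < d /\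
    forall x', (forall i, Rabs (x' i - x i) < d) -> U x'.

Definition cont_at (n : nat) (U : ('I_n -> R) -> Prop) (F : Fn n) x y : Prop :=
  forall eps, 0 < eps -> exists d, 0 < d /\
    forall x' y', onE U x' y' ->
      (forall i, Rabs (x' i - x i) < d /\ Rabs (y' i - y i) < d) ->
      Rabs (F x' y' - F x y) < eps.

Definition smooth_on (n : nat) (U : ('I_n -> R) -> Prop) (F : Fn n) : Prop :=
  forall ds : seq (bool * 'I_n), forall x y, onE U x y ->
    cont_at U (iterD ds F) x y /\
    forall mu : 'I_n,
      (exists l, derivable_pt_lim (fun t => iterD ds F (upd x mu t) y) 0 l) /\
      (exists l, derivable_pt_lim (fun t => iterD ds F x (upd y mu t)) 0 l).

Definition pos_homog2 (n : nat) (U : ('I_n -> R) -> Prop) (L : Fn n) : Prop :=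
  forall x y lam, onE U x y -> 0 < lam ->
    L x (fun i => lam * y i) = lam ^ 2 * L x y.

Definition kdelta (n : nat) (i j : 'I_n) : R := if i == j then 1 else 0.

Section Finsler.
Variables (n : nat) (L : Fn n) (ginv : 'I_n -> 'I_n -> Fn n).

Definition gmet (mu nu : 'I_n) : Fn n := Dy mu (Dy nu L).

Definition Cartan (a b c : 'I_n) : Fn n := fun x y => / 2 * Dy a (gmet b c) x y.

Definition Ilow (c : 'I_n) : Fn n :=
  fun x y => sumI (fun a => sumI (fun b => ginv a b x y * Cartan a b c x y)).

Definition spray (a : 'I_n) : Fn n :=
  fun x y => / 2 * sumI (fun d => ginv a d x y *
     (sumI (fun c => Dx c (Dy d L) x y * y c) - Dx d L x y)).

Definition Nconn (a mu : 'I_n) : Fn n := Dy mu (spray a).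

Definition Berwald (a mu nu : 'I_n) : Fn n := Dy nu (Nconn a mu).

Definition Ddelta (mu : 'I_n) (F : Fn n) : Fn n :=
  fun x y => Dx mu F x y - sumI (fun nu => Nconn nu mu x y * Dy nu F x y).

Definition Chern (a b c : 'I_n) : Fn n :=
  fun x y => / 2 * sumI (fun s => ginv a s x y *
    (Ddelta b (gmet s c) x y + Ddelta c (gmet s b) x y - Ddelta s (gmet b c) x y)).

Definition Landsberg (a b c : 'I_n) : Fn n :=
  fun x y => Berwald a b c x y - Chern a b c x y.

Definition Jlow (a : 'I_n) : Fn n := fun x y => sumI (fun mu => Landsberg mu a mu x y).

Definition Iup (mu : 'I_n) : Fn n := fun x y => sumI (fun nu => ginv mu nu x y * Ilow nu x y).
Definition Jup (a : 'I_n) : Fn n := fun x y => sumI (fun b => ginv a b x y * Jlow b x y).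

Definition divHC (Z : 'I_n -> Fn n) : Fn n :=
  fun x y => sumI (fun a => Ddelta a (Z a) x y + sumI (fun mu => Chern a mu a x y * Z mu x y)).

Definition gradV (f : Fn n) (mu : 'I_n) : Fn n :=
  fun x y => sumI (fun nu => ginv mu nu x y * Dy nu f x y).

End Finsler.

(** The first formula is the Leibniz rule for [δ_a (g^{aν} ∂_ν f)]: the Chern connection
    is compatible with the metric, so [δ_a g^{aν}] produces exactly the connection term of
    the divergence, plus [- g^{aν} Γ^α_{νa} ∂_α f].  For the second formula, expand
    [∂_ν (g^{νμ} δ_μ f)] with [[∂_ν, δ_μ] f = - G^s_{μν} ∂_s f] and
    [∂_ν g^{νμ} = - 2 I^μ]; what is left is [g^{μν} (G^α_{νμ} - Γ^α_{νμ}) ∂_α f], i.e. a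
    trace of the Landsberg tensor, and it equals [J^α ∂_α f] because the lowered Landsberg
    tensor [- 1/2 y_s ∂_a G^s_{bc}] is totally symmetric.  This symmetry comes from
    differentiating [δ_c L = 0] twice in [y], and [δ_c L = 0] follows from Euler's relation
    for the 2-homogeneous [L]. *)

From Pilot Require Import Defs.
From HB Require Import structures.
From mathcomp Require Import ssreflect ssrfun ssrbool eqtype ssrnat seq fintype bigop.
From Stdlib Require Import Reals Lra ClassicalEpsilon FunctionalExtensionality PropExtensionality.
From Coquelicot Require Import Hierarchy Continuity Derive Derive_2d.
(* [Reals] also defines a [Dx]; the partial derivative of [Defs] must win. *)
Import Defs.
Set Implicit Arguments.
Unset Strict Implicit.
Local Open Scope R_scope.

(** * Finite sums *)

Lemma Rplus_associative : associative Rplus.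
Proof. by move=> *; rewrite Rplus_assoc. Qed.

HB.instance Definition _ :=
  Monoid.isComLaw.Build R 0 Rplus Rplus_associative Rplus_comm Rplus_0_l.
HB.instance Definition _ := Monoid.isMulLaw.Build R 0 Rmult Rmult_0_l Rmult_0_r.
HB.instance Definition _ :=
  Monoid.isAddLaw.Build R Rmult Rplus Rmult_plus_distr_r Rmult_plus_distr_l.

Section Sums.
Variable n : nat.
Implicit Types (F G : 'I_n -> R) (i j : 'I_n).

Lemma sumIE F : sumI F = \big[Rplus/0]_(i < n) F i.
Proof. by rewrite -big_enum unlock /sumI; elim: (enum 'I_n) => //= a s ->. Qed.

Lemma eq_sumI F G : (forall i, F i = G i) -> sumI F = sumI G.
Proof. by move=> FG; rewrite !sumIE; apply: eq_bigr. Qed.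

Lemma sumI_eq0 F : (forall i, F i = 0) -> sumI F = 0.
Proof. by move=> F0; rewrite sumIE big1. Qed.

Lemma sumI_add F G : sumI (fun i => F i + G i) = sumI F + sumI G.
Proof. by rewrite !sumIE big_split. Qed.

Lemma sumI_mull c F : sumI (fun i => c * F i) = c * sumI F.
Proof. by rewrite !sumIE big_distrr. Qed.

Lemma sumI_mulr c F : sumI (fun i => F i * c) = sumI F * c.
Proof. by rewrite !sumIE big_distrl. Qed.

Lemma sumI_opp F : sumI (fun i => - F i) = - sumI F.
Proof. by rewrite !sumIE (big_morph Ropp Ropp_plus_distr Ropp_0). Qed.

Lemma sumI_sub F G : sumI (fun i => F i - G i) = sumI F - sumI G.
Proof. by rewrite sumI_add sumI_opp. Qed.

Lemma exchange_sumI (F : 'I_n -> 'I_n -> R) :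
  sumI (fun i => sumI (fun j => F i j)) = sumI (fun j => sumI (fun i => F i j)).
Proof.
rewrite sumIE (eq_bigr _ (fun i _ => sumIE (F i))) exchange_big sumIE.
by apply: eq_bigr => j _; rewrite sumIE.
Qed.

Lemma kdeltaC i j : kdelta i j = kdelta j i.
Proof. by rewrite /kdelta eq_sym. Qed.

Lemma sumI_kdelta_l i F : sumI (fun j => kdelta i j * F j) = F i.
Proof.
rewrite sumIE (bigD1 i) //= big1 /kdelta ?eqxx => [|j /negbTE]; first ring.
by rewrite eq_sym => ->; ring.
Qed.

Lemma sumI_kdelta_r i F : sumI (fun j => F j * kdelta j i) = F i.
Proof. by rewrite -(sumI_kdelta_l i F); apply: eq_sumI => j; rewrite kdeltaC Rmult_comm. Qed.

End Sums.

(** * Real analysis in one variable *)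

Lemma deriv_atE h l : derivable_pt_lim h 0 l -> deriv_at h = l.
Proof.
move=> hl; apply: (uniqueness_limite _ _ _ _ _ hl).
exact: (epsilon_spec (inhabits 0) (fun l => derivable_pt_lim h 0 l) (ex_intro _ l hl)).
Qed.

Lemma derivable_pt_lim_loc f g x l d : 0 < d -> (forall t, Rabs (t - x) < d -> f t = g t) ->
  derivable_pt_lim f x l -> derivable_pt_lim g x l.
Proof.
move=> d_gt0 fg; apply: (derivable_pt_lim_locally_ext f g x (x - d) (x + d)); first lra.
by move=> z zx; apply: fg; apply: Rabs_def1; lra.
Qed.

Lemma derivable_pt_lim_at0 f x l :
  derivable_pt_lim (fun s => f (x + s)) 0 l <-> derivable_pt_lim f x l.
Proof.
split=> fl eps eps_gt0; have [del fdel] := fl eps eps_gt0; exists del => h h_neq0 hd.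
  by have := fdel h h_neq0 hd; rewrite Rplus_0_l Rplus_0_r.
by rewrite Rplus_0_l Rplus_0_r; apply: fdel.
Qed.

Lemma derivable_pt_lim_scale f c l : derivable_pt_lim f 0 l ->
  derivable_pt_lim (fun t => f (c * t)) 0 (c * l).
Proof.
move=> fl; rewrite Rmult_comm.
apply: (derivable_pt_lim_comp (fun t => c * t)); last by rewrite Rmult_0_r.
by have := derivable_pt_lim_scal id c 0 1 (derivable_pt_lim_id 0); rewrite Rmult_1_r.
Qed.

Lemma derivable_pt_lim_big (T : Type) (s : seq T) (f : T -> R -> R) (l : T -> R) x :
  (forall i, derivable_pt_lim (f i) x (l i)) ->
  derivable_pt_lim (fun t => \big[Rplus/0]_(i <- s) f i t) x (\big[Rplus/0]_(i <- s) l i).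
Proof.
move=> fl; elim: s => [|a s IHs].
  rewrite big_nil; apply: (derivable_pt_lim_ext (fun _ => 0)) => [t|].
    by rewrite big_nil.
  exact: derivable_pt_lim_const.
rewrite big_cons; apply: (derivable_pt_lim_ext (fun t => f a t + \big[Rplus/0]_(i <- s) f i t)).
  by move=> t; rewrite big_cons.
exact: derivable_pt_lim_plus.
Qed.

Lemma Derive_derivable (g : R -> R) (t l : R) : derivable_pt_lim g t l -> Derive g t = l.
Proof. by move=> gl; apply/is_derive_unique/is_derive_Reals. Qed.

Lemma ex_derive_derivable (g : R -> R) (t l : R) : derivable_pt_lim g t l -> ex_derive g t.
Proof. by move=> gl; exists l; apply/is_derive_Reals. Qed.

Lemma Rmult_cont (a b eps : R) : 0 < eps -> exists e, 0 < e /\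
  forall a' b', Rabs (a' - a) < e -> Rabs (b' - b) < e -> Rabs (a' * b' - a * b) < eps.
Proof.
move=> eps_gt0; have ? := Rabs_pos a; have ? := Rabs_pos b.
have k_gt0 : 0 < eps / (Rabs a + Rabs b + 1) by apply: Rdiv_lt_0_compat; lra.
set e := Rmin 1 (eps / (Rabs a + Rabs b + 1)).
have e_1 : e <= 1 by apply: Rmin_l.
have e_k : e <= eps / (Rabs a + Rabs b + 1) by apply: Rmin_r.
exists e; split=> [|a' b' ha hb]; first by apply: Rmin_pos; lra.
have ek : e * (Rabs a + Rabs b + 1) <= eps.
  apply: (Rle_trans _ (eps / (Rabs a + Rabs b + 1) * (Rabs a + Rabs b + 1))).
    by apply: Rmult_le_compat_r; lra.
  by right; field; lra.
have -> : a' * b' - a * b = (a' - a) * (b' - b) + (a' - a) * b + a * (b' - b) by ring.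
apply: Rle_lt_trans (Rabs_triang _ _) _.
apply: Rle_lt_trans (Rplus_le_compat_r _ _ _ (Rabs_triang _ _)) _; rewrite !Rabs_mult.
have := Rabs_pos (a' - a); have := Rabs_pos (b' - b).
set u := Rabs (a' - a) in ha *; set v := Rabs (b' - b) in hb * => v_ge0 u_ge0.
have : u * v <= u * 1 by apply: Rmult_le_compat_l; lra.
have : u * Rabs b <= e * Rabs b by apply: Rmult_le_compat_r; lra.
have : Rabs a * v <= Rabs a * e by apply: Rmult_le_compat_l; lra.
lra.
Qed.

(** * Calculus in the coordinates of [E] *)

Section Coordinates.
Variables (n : nat) (U : ('I_n -> R) -> Prop).
Hypothesis U_open : chart_open U.
Local Notation onE := (onE U).
Local Notation smooth := (smooth_on U).
Implicit Types (F G : Fn n) (x y : 'I_n -> R) (mu nu : 'I_n) (d : bool * 'I_n)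
  (ds : seq (bool * 'I_n)).

Definition Dpar d F : Fn n := if d.1 then Dy d.2 F else Dx d.2 F.

Definition shift d (t : R) x y : ('I_n -> R) * ('I_n -> R) :=
  if d.1 then (x, upd y d.2 t) else (upd x d.2 t, y).

Definition evp F (p : ('I_n -> R) * ('I_n -> R)) : R := F p.1 p.2.

Lemma DparE d F x y : Dpar d F x y = deriv_at (fun t => evp F (shift d t x y)).
Proof. by case: d => [[] mu]. Qed.

Lemma iterD_cons d ds F : iterD (d :: ds) F = Dpar d (iterD ds F).
Proof. by case: d => [[] mu]. Qed.

Lemma iterD_rcons ds d F : iterD (rcons ds d) F = iterD ds (Dpar d F).
Proof.
elim: ds => [|e ds IHds]; first exact: iterD_cons.
by rewrite rcons_cons !iterD_cons IHds.
Qed.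

Lemma upd0 (v : 'I_n -> R) mu : upd v mu 0 = v.
Proof. by apply: functional_extensionality => i; rewrite /upd; case: ifP => _; ring. Qed.

Lemma upd_upd (v : 'I_n -> R) mu a b : upd (upd v mu a) mu b = upd v mu (a + b).
Proof. by apply: functional_extensionality => i; rewrite /upd; case: (i == mu); ring. Qed.

Lemma updC (v : 'I_n -> R) mu nu a b : upd (upd v mu a) nu b = upd (upd v nu b) mu a.
Proof.
apply: functional_extensionality => i; rewrite /upd.
by case: (i == mu); case: (i == nu) => //; ring.
Qed.

Lemma shift0 d x y : shift d 0 x y = (x, y).
Proof. by case: d => [[] mu]; rewrite /shift /= upd0. Qed.

Lemma shift_shift d x y a b :
  shift d b (shift d a x y).1 (shift d a x y).2 = shift d (a + b) x y.
Proof. by case: d => [[] mu]; rewrite /shift /= upd_upd. Qed.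

Lemma shiftC d (e : bool * 'I_n) x y a b :
  shift d a (shift e b x y).1 (shift e b x y).2 = shift e b (shift d a x y).1 (shift d a x y).2.
Proof. by case: d => [[] mu]; case: e => [[] nu]; rewrite /shift //= updC. Qed.

Definition close (del : R) x y x' y' :=
  forall i, Rabs (x' i - x i) < del /\ Rabs (y' i - y i) < del.

Lemma close_trans r1 r2 x y x1 y1 x2 y2 :
  close r1 x y x1 y1 -> close r2 x1 y1 x2 y2 -> close (r1 + r2) x y x2 y2.
Proof.
have tri (a b c : R) : Rabs (c - a) <= Rabs (c - b) + Rabs (b - a).
  by replace (c - a) with ((c - b) + (b - a)) by ring; apply: Rabs_triang.
move=> c1 c2 i; have [? ?] := c1 i; have [? ?] := c2 i.
by split; [have := tri (x i) (x1 i) (x2 i)|have := tri (y i) (y1 i) (y2 i)]; lra.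
Qed.

Lemma close_le r1 r2 x y x' y' : r1 <= r2 -> close r1 x y x' y' -> close r2 x y x' y'.
Proof. by move=> r12 c i; have [? ?] := c i; split; lra. Qed.

Lemma close_shift del d t x y : 0 < del -> Rabs t < del ->
  close del x y (shift d t x y).1 (shift d t x y).2.
Proof.
have upd_dist (v : 'I_n -> R) mu i : Rabs (upd v mu t i - v i) <= Rabs t.
  rewrite /upd; case: ifP => _; first by rewrite Rplus_minus_l; lra.
  by rewrite Rminus_diag Rabs_R0; apply: Rabs_pos.
move=> del_gt0 t_del i; case: d => [[] mu] /=; rewrite ?Rminus_diag ?Rabs_R0.
all: by split=> //; apply: Rle_lt_trans (upd_dist _ _ _) t_del.
Qed.

Lemma onE_open x y : onE x y ->
  exists del, 0 < del /\ forall x' y', close del x y x' y' -> onE x' y'.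
Proof.
move=> [Ux [i0 yi0]]; have [d1 [d1_gt0 U_d1]] := U_open Ux.
have y_gt0 : 0 < Rabs (y i0) by apply: Rabs_pos_lt.
exists (Rmin d1 (Rabs (y i0))); split; first exact: Rmin_pos.
move=> x' y' c; split.
  by apply: U_d1 => i; have [c1 _] := c i; apply: Rlt_le_trans c1 (Rmin_l _ _).
exists i0 => y'i0; have [_ c2] := c i0; move: c2; rewrite y'i0 Rminus_0_l Rabs_Ropp.
by have := Rmin_r d1 (Rabs (y i0)); lra.
Qed.

Lemma onE_shift x y d : onE x y ->
  exists del, 0 < del /\ forall t, Rabs t < del -> onE (shift d t x y).1 (shift d t x y).2.
Proof.
move=> Exy; have [del [del_gt0 Edel]] := onE_open Exy.
by exists del; split=> // t t_del; apply: Edel; apply: close_shift.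
Qed.

Lemma Dpar_loc F G d x y : onE x y ->
  (forall x' y', onE x' y' -> F x' y' = G x' y') -> Dpar d F x y = Dpar d G x y.
Proof.
move=> Exy FG; rewrite !DparE /deriv_at; have [del [del_gt0 Edel]] := onE_shift d Exy.
congr epsilon; apply: functional_extensionality => l; apply: propositional_extensionality.
by split; apply: derivable_pt_lim_loc del_gt0 _ => t; rewrite Rminus_0_r => /Edel /FG.
Qed.

Lemma iterD_loc ds F G : (forall x' y', onE x' y' -> F x' y' = G x' y') ->
  forall x y, onE x y -> iterD ds F x y = iterD ds G x y.
Proof.
move=> FG; elim: ds => [|d ds IHds] x y Exy; first exact: FG.
by rewrite !iterD_cons; apply: Dpar_loc.
Qed.

Lemma smooth_cont F x y : smooth F -> onE x y -> cont_at U F x y.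
Proof. by move=> sF Exy; have [] := sF [::] x y Exy. Qed.

Lemma smooth_derivable F d x y : smooth F -> onE x y ->
  derivable_pt_lim (fun t => evp F (shift d t x y)) 0 (Dpar d F x y).
Proof.
move=> sF Exy; have [_ dF] := sF [::] x y Exy.
case: d => [[] mu]; have [[l1 l1F] [l2 l2F]] := dF mu; rewrite /evp /Dpar /shift /=.
  by rewrite /Dy (deriv_atE l2F).
by rewrite /Dx (deriv_atE l1F).
Qed.

Lemma smooth_Dpar d F : smooth F -> smooth (Dpar d F).
Proof. by move=> sF ds; rewrite -iterD_rcons; apply: sF. Qed.

Lemma smooth_intro F :
  (forall x y, onE x y -> cont_at U F x y /\
      forall d, exists l, derivable_pt_lim (fun t => evp F (shift d t x y)) 0 l) ->
  (forall d, smooth (Dpar d F)) -> smooth F.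
Proof.
move=> F0 dF; case/lastP => [|ds d]; last by rewrite iterD_rcons; apply: dF.
move=> x y Exy /=; have [cF eF] := F0 x y Exy.
by split=> // mu; split; [apply: (eF (false, mu))|apply: (eF (true, mu))].
Qed.

Lemma cont_at_ext F G x y : (forall x' y', onE x' y' -> F x' y' = G x' y') ->
  onE x y -> cont_at U F x y -> cont_at U G x y.
Proof.
move=> FG Exy cF eps eps_gt0; have [d [d_gt0 Fd]] := cF eps eps_gt0.
by exists d; split=> // x' y' Exy' c; rewrite -!FG //; apply: Fd.
Qed.

Lemma smooth_ext F G : (forall x' y', onE x' y' -> F x' y' = G x' y') -> smooth F -> smooth G.
Proof.
move=> FG sF ds x y Exy; have [cF dF] := sF ds x y Exy.
have FGds := iterD_loc ds FG.
split; first exact: cont_at_ext FGds Exy cF.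
have loc d l : derivable_pt_lim (fun t => evp (iterD ds F) (shift d t x y)) 0 l ->
                derivable_pt_lim (fun t => evp (iterD ds G) (shift d t x y)) 0 l.
  have [del [del_gt0 Edel]] := onE_shift d Exy.
  by apply: derivable_pt_lim_loc del_gt0 _ => t; rewrite Rminus_0_r => /Edel /FGds.
move=> mu; have [[l1 l1F] [l2 l2F]] := dF mu.
by split; eexists; [exact: (loc (false, mu) l1 l1F)|exact: (loc (true, mu) l2 l2F)].
Qed.

Lemma cont_at_const c x y : cont_at U (fun _ _ => c) x y.
Proof. by move=> eps eps_gt0; exists 1; split=> [|*]; rewrite ?Rminus_diag ?Rabs_R0; lra. Qed.

Lemma cont_at_mul F G x y : cont_at U F x y -> cont_at U G x y ->
  cont_at U (fun x y => F x y * G x y) x y.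
Proof.
move=> cF cG eps eps_gt0; have [e [e_gt0 FGe]] := Rmult_cont (F x y) (G x y) eps_gt0.
have [d1 [d1_gt0 F1]] := cF _ e_gt0; have [d2 [d2_gt0 G2]] := cG _ e_gt0.
exists (Rmin d1 d2); split=> [|x' y' Exy' c]; first exact: Rmin_pos.
apply: FGe; [apply: F1|apply: G2] => //.
  by apply: close_le c; apply: Rmin_l.
by apply: close_le c; apply: Rmin_r.
Qed.

Lemma cont_at_add F G x y : cont_at U F x y -> cont_at U G x y ->
  cont_at U (fun x y => F x y + G x y) x y.
Proof.
move=> cF cG eps eps_gt0; have eps2_gt0 : 0 < eps / 2 by lra.
have [d1 [d1_gt0 F1]] := cF _ eps2_gt0; have [d2 [d2_gt0 G2]] := cG _ eps2_gt0.
exists (Rmin d1 d2); split=> [|x' y' Exy' c]; first exact: Rmin_pos.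
have c1 : close d1 x y x' y' by apply: close_le c; apply: Rmin_l.
have c2 : close d2 x y x' y' by apply: close_le c; apply: Rmin_r.
have := F1 _ _ Exy' c1; have := G2 _ _ Exy' c2.
have -> : F x' y' + G x' y' - (F x y + G x y) = (F x' y' - F x y) + (G x' y' - G x y) by ring.
by have := Rabs_triang (F x' y' - F x y) (G x' y' - G x y); lra.
Qed.

(* Finite sums of products of smooth functions are closed under [Dpar]; this
   gives the smoothness of a product without a Leibniz formula for [iterD]. *)
Definition sum_prod (l : seq (Fn n * Fn n)) : Fn n :=
  fun x y => foldr (fun p acc => p.1 x y * p.2 x y + acc) 0 l.

Fixpoint smooth_pairs (l : seq (Fn n * Fn n)) : Prop :=
  if l is p :: l' then [/\ smooth p.1, smooth p.2 & smooth_pairs l'] else True.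

Fixpoint Dpar_pairs d (l : seq (Fn n * Fn n)) : seq (Fn n * Fn n) :=
  if l is p :: l' then (Dpar d p.1, p.2) :: (p.1, Dpar d p.2) :: Dpar_pairs d l' else [::].

Lemma smooth_Dpar_pairs d l : smooth_pairs l -> smooth_pairs (Dpar_pairs d l).
Proof.
elim: l => //= p l IHl [s1 s2 /IHl sl].
by split=> //; [apply: smooth_Dpar|split=> //; apply: smooth_Dpar].
Qed.

Lemma cont_at_sum_prod l x y : smooth_pairs l -> onE x y -> cont_at U (sum_prod l) x y.
Proof.
elim: l => [|p l IHl] /=; first by move=> _ _; apply: cont_at_const.
move=> [s1 s2 sl] Exy; apply: cont_at_add (IHl sl Exy).
by apply: cont_at_mul; apply: smooth_cont.
Qed.

Lemma derivable_sum_prod l d x y : smooth_pairs l -> onE x y ->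
  derivable_pt_lim (fun t => evp (sum_prod l) (shift d t x y)) 0 (sum_prod (Dpar_pairs d l) x y).
Proof.
elim: l => [|p l IHl] /=; first by move=> _ _; apply: derivable_pt_lim_const.
move=> [s1 s2 sl] Exy.
have := derivable_pt_lim_plus _ _ _ _ _
  (derivable_pt_lim_mult _ _ _ _ _ (smooth_derivable d s1 Exy) (smooth_derivable d s2 Exy))
  (IHl sl Exy).
by rewrite /evp shift0 /= /sum_prod /= Rplus_assoc.
Qed.

Lemma iterD_sum_prod l ds : smooth_pairs l -> exists l', smooth_pairs l' /\
  forall x y, onE x y -> iterD ds (sum_prod l) x y = sum_prod l' x y.
Proof.
move=> sl; elim: ds => [|d ds [l' [sl' ds_l']]]; first by exists l.
exists (Dpar_pairs d l'); split=> [|x y Exy]; first exact: smooth_Dpar_pairs.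
rewrite iterD_cons (Dpar_loc _ _ ds_l') // DparE.
exact/deriv_atE/derivable_sum_prod.
Qed.

Lemma smooth_sum_prod l : smooth_pairs l -> smooth (sum_prod l).
Proof.
move=> sl ds x y Exy; have [l' [sl' ds_l']] := iterD_sum_prod ds sl.
have FG x' y' : onE x' y' -> sum_prod l' x' y' = iterD ds (sum_prod l) x' y'.
  by move/ds_l'.
split; first exact: cont_at_ext FG Exy (cont_at_sum_prod sl' Exy).
have loc d : derivable_pt_lim (fun t => evp (iterD ds (sum_prod l)) (shift d t x y)) 0
                (sum_prod (Dpar_pairs d l') x y).
  have [del [del_gt0 Edel]] := onE_shift d Exy.
  apply: derivable_pt_lim_loc del_gt0 _ (derivable_sum_prod d sl' Exy) => t.
  by rewrite Rminus_0_r => /Edel /FG.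
by move=> mu; split; eexists; [exact: (loc (false, mu))|exact: (loc (true, mu))].
Qed.

Lemma Dpar_const d c : Dpar d (fun _ _ => c) = (fun _ _ => 0).
Proof.
do 2 apply: functional_extensionality => ?.
by rewrite DparE; apply/deriv_atE/derivable_pt_lim_const.
Qed.

Lemma iterD_const ds c : exists c', iterD ds (fun _ _ => c) = (fun _ _ => c').
Proof.
elim: ds => [|d ds [c' IHds]]; first by exists c.
by exists 0; rewrite iterD_cons IHds Dpar_const.
Qed.

Lemma smooth_const c : smooth (fun _ _ => c).
Proof.
move=> ds x y _; have [c' ->] := iterD_const ds c.
split=> [|mu]; first exact: cont_at_const.
by split; exists 0; apply: derivable_pt_lim_const.
Qed.

Lemma smooth_mul F G : smooth F -> smooth G -> smooth (fun x y => F x y * G x y).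
Proof.
move=> sF sG; apply: (smooth_ext (F := sum_prod [:: (F, G)])) => [x y _|].
  by rewrite /sum_prod /=; ring.
exact: smooth_sum_prod.
Qed.

Lemma smooth_add F G : smooth F -> smooth G -> smooth (fun x y => F x y + G x y).
Proof.
move=> sF sG; apply: (smooth_ext (F := sum_prod [:: (F, fun _ _ => 1); (fun _ _ => 1, G)])).
  by move=> x y _; rewrite /sum_prod /=; ring.
by apply: smooth_sum_prod; split=> //; [|split=> //]; apply: smooth_const.
Qed.

Lemma smooth_scal c F : smooth F -> smooth (fun x y => c * F x y).
Proof. by apply: smooth_mul (smooth_const c). Qed.

Lemma smooth_sub F G : smooth F -> smooth G -> smooth (fun x y => F x y - G x y).
Proof.
move=> sF sG; apply: (smooth_ext (F := fun x y => F x y + -1 * G x y)) => [x y _|]; first ring.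
by apply: smooth_add => //; apply: smooth_scal.
Qed.

Lemma smooth_sumI (F : 'I_n -> Fn n) : (forall i, smooth (F i)) ->
  smooth (fun x y => sumI (fun i => F i x y)).
Proof.
move=> sF; apply: (smooth_ext (F := fun x y => \big[Rplus/0]_(i <- index_enum 'I_n) F i x y)).
  by move=> x y _; rewrite sumIE.
elim: (index_enum 'I_n) => [|i s IHs].
  by apply: (smooth_ext (F := fun _ _ => 0)) => [x y _|]; rewrite ?big_nil //; apply: smooth_const.
apply: (smooth_ext (F := fun x y => F i x y + \big[Rplus/0]_(j <- s) F j x y)).
  by move=> x y _; rewrite big_cons.
exact: smooth_add.
Qed.

Lemma derivable_ycoord d (c : 'I_n) x y : derivable_pt_lim
  (fun t => evp (fun _ y => y c) (shift d t x y)) 0 (if d.1 && (c == d.2) then 1 else 0).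
Proof.
case: d => [[] mu]; rewrite /evp /shift /upd /=; last exact: derivable_pt_lim_const.
case: (c == mu); last exact: derivable_pt_lim_const.
by have := derivable_pt_lim_plus _ _ _ _ _ (derivable_pt_lim_const (y c) 0)
  (derivable_pt_lim_id 0); rewrite Rplus_0_l.
Qed.

Lemma Dpar_ycoord d (c : 'I_n) x y :
  Dpar d (fun _ y => y c) x y = if d.1 && (c == d.2) then 1 else 0.
Proof. by rewrite DparE; apply/deriv_atE/derivable_ycoord. Qed.

Lemma smooth_ycoord (c : 'I_n) : smooth (fun _ y => y c).
Proof.
apply: smooth_intro => [x y Exy|d].
  split=> [eps eps_gt0|d]; first by exists eps; split=> // x' y' _ /(_ c) [].
  by eexists; apply: derivable_ycoord.
apply: (smooth_ext (F := fun _ _ => if d.1 && (c == d.2) then 1 else 0)).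
  by move=> x y _; rewrite Dpar_ycoord.
exact: smooth_const.
Qed.

Lemma Dpar_mul d F G x y : smooth F -> smooth G -> onE x y ->
  Dpar d (fun x y => F x y * G x y) x y = Dpar d F x y * G x y + F x y * Dpar d G x y.
Proof.
move=> sF sG Exy; rewrite DparE; apply: deriv_atE.
have := derivable_pt_lim_mult _ _ _ _ _ (smooth_derivable d sF Exy) (smooth_derivable d sG Exy).
by rewrite /evp shift0.
Qed.

Lemma Dpar_add d F G x y : smooth F -> smooth G -> onE x y ->
  Dpar d (fun x y => F x y + G x y) x y = Dpar d F x y + Dpar d G x y.
Proof.
move=> sF sG Exy; rewrite DparE; apply: deriv_atE.
exact: derivable_pt_lim_plus (smooth_derivable d sF Exy) (smooth_derivable d sG Exy).
Qed.

Lemma Dpar_sub d F G x y : smooth F -> smooth G -> onE x y ->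
  Dpar d (fun x y => F x y - G x y) x y = Dpar d F x y - Dpar d G x y.
Proof.
move=> sF sG Exy; rewrite DparE; apply: deriv_atE.
exact: derivable_pt_lim_minus (smooth_derivable d sF Exy) (smooth_derivable d sG Exy).
Qed.

Lemma Dpar_scal d c F x y : smooth F -> onE x y ->
  Dpar d (fun x y => c * F x y) x y = c * Dpar d F x y.
Proof.
move=> sF Exy; rewrite (Dpar_mul d (smooth_const c) sF Exy) Dpar_const; ring.
Qed.

Lemma Dpar_sumI d (F : 'I_n -> Fn n) x y : (forall i, smooth (F i)) -> onE x y ->
  Dpar d (fun x y => sumI (fun i => F i x y)) x y = sumI (fun i => Dpar d (F i) x y).
Proof.
move=> sF Exy; rewrite DparE sumIE; apply: deriv_atE.
apply: (derivable_pt_lim_ext (fun t => \big[Rplus/0]_(i < n) evp (F i) (shift d t x y))).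
  by move=> t; rewrite /evp sumIE.
by apply: derivable_pt_lim_big => i; apply: smooth_derivable.
Qed.

Lemma derivable_shift G d u x y : smooth G ->
  onE (shift d u x y).1 (shift d u x y).2 ->
  derivable_pt_lim (fun t => evp G (shift d t x y)) u (evp (Dpar d G) (shift d u x y)).
Proof.
move=> sG Eu; apply/derivable_pt_lim_at0.
apply: (derivable_pt_lim_ext (fun s => evp G (shift d s (shift d u x y).1 (shift d u x y).2))).
  by move=> s; rewrite shift_shift.
exact: smooth_derivable.
Qed.

Definition shift2 d1 d2 u v x y := shift d1 u (shift d2 v x y).1 (shift d2 v x y).2.

Lemma shift2C d1 d2 u v x y : shift2 d1 d2 u v x y = shift2 d2 d1 v u x y.
Proof. exact: shiftC. Qed.

Lemma shift2_00 d1 d2 x y : shift2 d1 d2 0 0 x y = (x, y).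
Proof. by rewrite /shift2 !shift0. Qed.

Lemma close_shift2 r d1 d2 u v x y : 0 < r -> Rabs u < r / 2 -> Rabs v < r / 2 ->
  close r x y (shift2 d1 d2 u v x y).1 (shift2 d1 d2 u v x y).2.
Proof.
move=> r_gt0 ur vr; rewrite {1}(double_var r).
by apply: close_trans (close_shift _ _ _ _ vr) (close_shift _ _ _ _ ur); lra.
Qed.

Lemma onE_shift2 d1 d2 x y : onE x y -> exists del, 0 < del /\ forall u v,
  Rabs u < del -> Rabs v < del -> onE (shift2 d1 d2 u v x y).1 (shift2 d1 d2 u v x y).2.
Proof.
move=> Exy; have [del [del_gt0 Edel]] := onE_open Exy.
by exists (del / 2); split=> [|u v ud vd]; [lra|apply/Edel/close_shift2].
Qed.

Lemma continuity_2d_shift2 H d1 d2 x y : smooth H -> onE x y ->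
  continuity_2d_pt (fun u v => evp H (shift2 d1 d2 u v x y)) 0 0.
Proof.
move=> sH Exy eps; have [r [r_gt0 Hr]] := smooth_cont sH Exy (cond_pos eps).
have [del [del_gt0 Edel]] := onE_shift2 d1 d2 Exy.
have m_gt0 : 0 < Rmin del (r / 2) by apply: Rmin_pos; lra.
exists (mkposreal _ m_gt0) => u v /=; rewrite !Rminus_0_r shift2_00 => um vm.
have := Rmin_l del (r / 2); have := Rmin_r del (r / 2) => m_r m_del.
by apply: Hr; [apply: Edel|apply: close_shift2]; lra.
Qed.

Lemma Dpar_comm F d1 d2 x y : smooth F -> onE x y ->
  Dpar d1 (Dpar d2 F) x y = Dpar d2 (Dpar d1 F) x y.
Proof.
move=> sF Exy; have [del [del_gt0 Edel]] := onE_shift2 d1 d2 Exy.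
pose f u v := evp F (shift2 d1 d2 u v x y).
have D1 u v : Rabs u < del -> Rabs v < del ->
    derivable_pt_lim (fun t => f t v) u (evp (Dpar d1 F) (shift2 d1 d2 u v x y)).
  by move=> ud vd; apply: derivable_shift sF (Edel u v ud vd).
have D2 u v : Rabs u < del -> Rabs v < del ->
    derivable_pt_lim (fun t => f u t) v (evp (Dpar d2 F) (shift2 d1 d2 u v x y)).
  move=> ud vd; apply: (derivable_pt_lim_ext (fun t => evp F (shift2 d2 d1 t u x y))).
    by move=> t; rewrite /f shift2C.
  by have := Edel u v ud vd; rewrite shift2C; apply: derivable_shift sF.
have M1 u v : Rabs u < del -> Rabs v < del -> derivable_pt_lim
    (fun s => Derive (fun t => f s t) v) u (evp (Dpar d1 (Dpar d2 F)) (shift2 d1 d2 u v x y)).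
  move=> ud vd; apply: (derivable_pt_lim_loc
    (f := fun s => evp (Dpar d2 F) (shift2 d1 d2 s v x y)) (d := del - Rabs u)); first lra.
    move=> s su; symmetry; apply/Derive_derivable/D2 => //.
    by have := Rabs_triang_inv s u; lra.
  exact: derivable_shift (smooth_Dpar d2 sF) (Edel u v ud vd).
have M2 u v : Rabs u < del -> Rabs v < del -> derivable_pt_lim
    (fun s => Derive (fun t => f t s) u) v (evp (Dpar d2 (Dpar d1 F)) (shift2 d1 d2 u v x y)).
  move=> ud vd; apply: (derivable_pt_lim_loc
    (f := fun s => evp (Dpar d1 F) (shift2 d2 d1 s u x y)) (d := del - Rabs v)); first lra.
    move=> s sv; symmetry; rewrite -shift2C; apply/Derive_derivable/D1 => //.
    by have := Rabs_triang_inv s v; lra.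
  by have := Edel u v ud vd; rewrite shift2C; apply: derivable_shift (smooth_Dpar d1 sF).
have near0 P : (forall u v, Rabs u < del -> Rabs v < del -> P u v) -> locally_2d P 0 0.
  by move=> PH; exists (mkposreal _ del_gt0) => u v /=; rewrite !Rminus_0_r; apply: PH.
have del0 : Rabs 0 < del by rewrite Rabs_R0.
have -> : Dpar d1 (Dpar d2 F) x y = Derive (fun s => Derive (fun t => f s t) 0) 0.
  by rewrite (Derive_derivable (M1 0 0 del0 del0)) shift2_00.
have -> : Dpar d2 (Dpar d1 F) x y = Derive (fun s => Derive (fun t => f t s) 0) 0.
  by rewrite (Derive_derivable (M2 0 0 del0 del0)) shift2_00.
apply: Schwarz.
- apply: near0 => u v ud vd.
  by do ![split]; apply: ex_derive_derivable; [exact: D1|exact: D2|exact: M1|exact: M2].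
- apply: (continuity_2d_pt_ext_loc _ _ _ _ _
    (continuity_2d_shift2 d1 d2 (smooth_Dpar d1 (smooth_Dpar d2 sF)) Exy)).
  by apply: near0 => u v ud vd; rewrite (Derive_derivable (M1 u v ud vd)).
- apply: (continuity_2d_pt_ext_loc _ _ _ _ _
    (continuity_2d_shift2 d1 d2 (smooth_Dpar d2 (smooth_Dpar d1 sF)) Exy)).
  by apply: near0 => u v ud vd; rewrite (Derive_derivable (M2 u v ud vd)).
Qed.

Lemma derivable_Dy_upd F a x w c : smooth F -> onE x (upd w a c) ->
  derivable_pt_lim (fun t => F x (upd w a t)) c (Dy a F x (upd w a c)).
Proof. exact: (@derivable_shift F (true, a) c x w). Qed.

Lemma MVT_upd F a x w T : smooth F -> (forall t, Rabs t <= Rabs T -> onE x (upd w a t)) ->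
  exists c, Rabs c <= Rabs T /\ F x (upd w a T) - F x w = T * Dy a F x (upd w a c).
Proof.
move=> sF ET; have F0 : F x (upd w a 0) = F x w by rewrite upd0.
have [T_lt0|[->|T_gt0]] := Rtotal_order T 0.
- have [c [Fc c_T]] :=
    MVT_cor2 (fun t => F x (upd w a t)) (fun t => Dy a F x (upd w a t)) T 0 T_lt0
    (fun c cT => derivable_Dy_upd sF (ET c ltac:(rewrite !Rabs_left1; lra))).
  by exists c; split; [rewrite !Rabs_left1; lra|rewrite -F0; lra].
- by exists 0; rewrite upd0 Rabs_R0; split; [lra|ring].
- have [c [Fc c_T]] :=
    MVT_cor2 (fun t => F x (upd w a t)) (fun t => Dy a F x (upd w a t)) 0 T T_gt0
    (fun c cT => derivable_Dy_upd sF (ET c ltac:(rewrite !Rabs_right; lra))).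
  by exists c; split; [rewrite !Rabs_right; lra|rewrite -F0; lra].
Qed.

(* The chain rule along the ray [y + h v] is proved one coordinate at a time, by the mean
   value theorem and the continuity of the partial derivatives. *)
Definition partial_ray y (v : 'I_n -> R) (S : seq 'I_n) (h : R) : 'I_n -> R :=
  fun i => y i + (if i \in S then h * v i else 0).

Lemma partial_ray_cons y v a S h : a \notin S ->
  partial_ray y v (a :: S) h = upd (partial_ray y v S h) a (h * v a).
Proof.
move=> aS; apply: functional_extensionality => i; rewrite /partial_ray /upd in_cons.
by case: (i =P a) => [->|]; rewrite ?(negbTE aS) /=; [ring|].
Qed.

Lemma partial_ray0 y v S : partial_ray y v S 0 = y.
Proof. by apply: functional_extensionality => i; rewrite /partial_ray; case: (i \in S); ring. Qed.

Lemma bounded_coords (v : 'I_n -> R) : exists M, 0 < M /\ forall i, Rabs (v i) <= M.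
Proof.
have sum_ge0 (P : pred 'I_n) : 0 <= \big[Rplus/0]_(i < n | P i) Rabs (v i).
  by apply: big_ind => [|? ? ? ?|? _]; [lra|lra|apply: Rabs_pos].
exists (1 + \big[Rplus/0]_(i < n) Rabs (v i)); split=> [|i].
  by have : 0 <= \big[Rplus/0]_(i < n) Rabs (v i) := sum_ge0 _; lra.
rewrite (bigD1 i) //=; set s := \big[_/_]_(j < n | _) _.
by have : 0 <= s := sum_ge0 _; lra.
Qed.

Lemma close_partial_ray x y (v : 'I_n -> R) (S : seq 'I_n) (a : 'I_n) r :
  0 < r -> a \notin S -> exists e, 0 < e /\
  forall h t, Rabs h < e -> Rabs t <= Rabs (h * v a) ->
    close r x y x (upd (partial_ray y v S h) a t).
Proof.
move=> r_gt0 aS; have [M [M_gt0 vM]] := bounded_coords v.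
have e_gt0 : 0 < r / M by apply: Rdiv_lt_0_compat.
exists (r / M); split=> // h t he ht.
have hv i : Rabs (h * v i) < r.
  rewrite Rabs_mult; apply: (Rle_lt_trans _ (Rabs h * M)).
    by apply: Rmult_le_compat_l; [apply: Rabs_pos|apply: vM].
  by have := Rmult_lt_compat_r M _ _ M_gt0 he; rewrite /Rdiv Rmult_assoc Rinv_l; lra.
move=> i; rewrite Rminus_diag Rabs_R0; split=> //; rewrite /upd /partial_ray.
case: (i =P a) => [->|_]; first by rewrite (negbTE aS) Rplus_0_r Rplus_minus_l; have := hv a; lra.
case: (i \in S); rewrite Rplus_minus_l ?Rabs_R0 //.
Qed.

Lemma derivable_ray_step F x y (v : 'I_n -> R) (a : 'I_n) (S : seq 'I_n) :
  smooth F -> onE x y -> a \notin S ->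
  derivable_pt_lim
    (fun h => F x (upd (partial_ray y v S h) a (h * v a)) - F x (partial_ray y v S h))
    0 (v a * Dy a F x y).
Proof.
move=> sF Exy aS eps eps_gt0.
have ? := Rabs_pos (v a).
have k_gt0 : 0 < eps / (Rabs (v a) + 1) by apply: Rdiv_lt_0_compat; lra.
have [r [r_gt0 Fr]] := smooth_cont (smooth_Dpar (true, a) sF) Exy k_gt0.
have [del [del_gt0 Edel]] := onE_open Exy.
have [e [e_gt0 ray]] := close_partial_ray x y v (Rmin_pos _ _ del_gt0 r_gt0) aS.
exists (mkposreal _ e_gt0) => h h_neq0 /= he.
have Et t : Rabs t <= Rabs (h * v a) -> onE x (upd (partial_ray y v S h) a t).
  by move=> ht; apply/Edel/(close_le (Rmin_l _ _))/ray.
rewrite Rplus_0_l Rmult_0_l partial_ray0 upd0 Rminus_diag Rminus_0_r.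
have [c [c_h ->]] := MVT_upd sF Et.
have -> : h * v a * Dy a F x (upd (partial_ray y v S h) a c) / h - v a * Dy a F x y
    = v a * (Dy a F x (upd (partial_ray y v S h) a c) - Dy a F x y) by field.
have := Fr _ _ (Et c c_h) (close_le (Rmin_r _ _) (ray h c he c_h)).
rewrite Rabs_mult; set D := Rabs _ => Dk.
apply: (Rle_lt_trans _ (Rabs (v a) * (eps / (Rabs (v a) + 1)))).
  by apply: Rmult_le_compat_l; lra.
apply: (Rmult_lt_reg_r (Rabs (v a) + 1)); first lra.
have -> : Rabs (v a) * (eps / (Rabs (v a) + 1)) * (Rabs (v a) + 1) = Rabs (v a) * eps.
  by field; lra.
nra.
Qed.

Lemma derivable_partial_ray F x y (v : 'I_n -> R) (S : seq 'I_n) : smooth F -> onE x y -> uniq S ->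
  derivable_pt_lim (fun h => F x (partial_ray y v S h)) 0
    (\big[Rplus/0]_(a <- S) (v a * Dy a F x y)).
Proof.
move=> sF Exy; elim: S => [|a S IHS] /=.
  move=> _; rewrite big_nil; apply: (derivable_pt_lim_ext (fun _ => F x y)).
    move=> h; rewrite /partial_ray; congr F.
    by apply: functional_extensionality => i; rewrite in_nil; ring.
  exact: derivable_pt_lim_const.
move=> /andP [aS /IHS dS]; rewrite big_cons.
apply: (derivable_pt_lim_ext (fun h =>
  (F x (upd (partial_ray y v S h) a (h * v a)) - F x (partial_ray y v S h))
  + F x (partial_ray y v S h))).
  by move=> h; rewrite partial_ray_cons //; ring.
exact: derivable_pt_lim_plus (derivable_ray_step _ sF Exy aS) dS.
Qed.

Lemma derivable_ray F x y (v : 'I_n -> R) : smooth F -> onE x y ->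
  derivable_pt_lim (fun h => F x (fun i => y i + h * v i)) 0 (sumI (fun a => v a * Dy a F x y)).
Proof.
move=> sF Exy; rewrite sumIE -big_enum.
apply: (derivable_pt_lim_ext (fun h => F x (partial_ray y v (enum 'I_n) h))).
  by move=> h; congr F; apply: functional_extensionality => i; rewrite /partial_ray mem_enum.
exact: derivable_partial_ray (enum_uniq _).
Qed.

Lemma Euler_homogeneous F x y k : smooth F -> onE x y ->
  (forall lam, 0 < lam -> F x (fun i => lam * y i) = lam ^ k * F x y) ->
  sumI (fun a => y a * Dy a F x y) = INR k * F x y.
Proof.
move=> sF Exy Fk; apply: (uniqueness_limite (fun h => (1 + h) ^ k * F x y) 0).
  apply: (derivable_pt_lim_loc (f := fun h => F x (fun i => y i + h * y i)) (d := 1)).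
  - lra.
  - move=> t; rewrite Rminus_0_r => /Rabs_def2 t1; rewrite -Fk; last lra.
    by congr F; apply: functional_extensionality => i; ring.
  exact: derivable_ray.
have := derivable_pt_lim_mult _ _ _ _ _
  (proj2 (derivable_pt_lim_at0 _ _ _) (derivable_pt_lim_pow 1 k))
  (derivable_pt_lim_const (F x y) 0).
by rewrite pow1 /= Rplus_0_r /fct_cte Rmult_1_r pow1 Rmult_0_r Rplus_0_r.
Qed.

Definition derivation_at (D : Fn n -> Fn n) x y : Prop :=
  [/\ forall F G, smooth F -> smooth G ->
        D (fun x y => F x y * G x y) x y = D F x y * G x y + F x y * D G x y,
      forall Fs : 'I_n -> Fn n, (forall i, smooth (Fs i)) ->
        D (fun x y => sumI (fun i => Fs i x y)) x y = sumI (fun i => D (Fs i) x y)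
    & forall F c, (forall x' y', onE x' y' -> F x' y' = c) -> D F x y = 0].

Lemma derivation_Dpar d x y : onE x y -> derivation_at (Dpar d) x y.
Proof.
move=> Exy; split=> [F G sF sG|Fs sFs|F c Fc]; first exact: Dpar_mul.
  exact: Dpar_sumI.
by rewrite (Dpar_loc (G := fun _ _ => c) d Exy Fc) Dpar_const.
Qed.

Lemma smooth_Dx mu F : smooth F -> smooth (Dx mu F).
Proof. exact: (smooth_Dpar (false, mu)). Qed.

Lemma smooth_Dy mu F : smooth F -> smooth (Dy mu F).
Proof. exact: (smooth_Dpar (true, mu)). Qed.

Lemma Dx_mul mu F G x y : smooth F -> smooth G -> onE x y ->
  Dx mu (fun x y => F x y * G x y) x y = Dx mu F x y * G x y + F x y * Dx mu G x y.
Proof. exact: (Dpar_mul (false, mu)). Qed.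

Lemma Dy_mul mu F G x y : smooth F -> smooth G -> onE x y ->
  Dy mu (fun x y => F x y * G x y) x y = Dy mu F x y * G x y + F x y * Dy mu G x y.
Proof. exact: (Dpar_mul (true, mu)). Qed.

Lemma Dy_add mu F G x y : smooth F -> smooth G -> onE x y ->
  Dy mu (fun x y => F x y + G x y) x y = Dy mu F x y + Dy mu G x y.
Proof. exact: (Dpar_add (true, mu)). Qed.

Lemma Dy_sub mu F G x y : smooth F -> smooth G -> onE x y ->
  Dy mu (fun x y => F x y - G x y) x y = Dy mu F x y - Dy mu G x y.
Proof. exact: (Dpar_sub (true, mu)). Qed.

Lemma Dy_scal mu c F x y : smooth F -> onE x y ->
  Dy mu (fun x y => c * F x y) x y = c * Dy mu F x y.
Proof. exact: (Dpar_scal (true, mu)). Qed.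

Lemma Dx_sumI mu (F : 'I_n -> Fn n) x y : (forall i, smooth (F i)) -> onE x y ->
  Dx mu (fun x y => sumI (fun i => F i x y)) x y = sumI (fun i => Dx mu (F i) x y).
Proof. exact: (Dpar_sumI (false, mu)). Qed.

Lemma Dy_sumI mu (F : 'I_n -> Fn n) x y : (forall i, smooth (F i)) -> onE x y ->
  Dy mu (fun x y => sumI (fun i => F i x y)) x y = sumI (fun i => Dy mu (F i) x y).
Proof. exact: (Dpar_sumI (true, mu)). Qed.

Lemma Dy_const mu c x y : Dy mu (fun _ _ => c) x y = 0.
Proof. by change (Dpar (true, mu) (fun _ _ => c) x y = 0); rewrite Dpar_const. Qed.

Lemma Dy_ycoord mu (c : 'I_n) x y : Dy mu (fun _ y => y c) x y = kdelta c mu.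
Proof. by change (Dpar (true, mu) (fun _ y => y c) x y = kdelta c mu); rewrite Dpar_ycoord. Qed.

Lemma Dx_loc mu F G x y : onE x y -> (forall x' y', onE x' y' -> F x' y' = G x' y') ->
  Dx mu F x y = Dx mu G x y.
Proof. exact: (Dpar_loc (false, mu)). Qed.

Lemma Dy_loc mu F G x y : onE x y -> (forall x' y', onE x' y' -> F x' y' = G x' y') ->
  Dy mu F x y = Dy mu G x y.
Proof. exact: (Dpar_loc (true, mu)). Qed.

Lemma DyC a b F x y : smooth F -> onE x y -> Dy a (Dy b F) x y = Dy b (Dy a F) x y.
Proof. exact: (Dpar_comm (true, a) (true, b)). Qed.

Lemma Dy_DxC a b F x y : smooth F -> onE x y -> Dy a (Dx b F) x y = Dx b (Dy a F) x y.
Proof. exact: (Dpar_comm (true, a) (false, b)). Qed.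

(** * Finsler geometry *)

Section Finsler.
Variables (L : Fn n) (ginv : 'I_n -> 'I_n -> Fn n).
Hypothesis L_smooth : smooth L.
Hypothesis L_homog : pos_homog2 U L.
Hypothesis ginv_smooth : forall a b, smooth (ginv a b).
Hypothesis ginv_gmet : forall x y, onE x y -> forall a c,
  sumI (fun b => ginv a b x y * gmet L b c x y) = kdelta a c /\
  sumI (fun b => gmet L a b x y * ginv b c x y) = kdelta a c.
Local Notation g := (gmet L).
Local Notation N := (Nconn L ginv).
Local Notation B := (Berwald L ginv).
Local Notation Gam := (Chern L ginv).
Local Notation Dl := (Ddelta L ginv).
Implicit Types (a b c e s : 'I_n).

Lemma smooth_gmet a b : smooth (g a b).
Proof. exact/smooth_Dy/smooth_Dy. Qed.

Lemma smooth_spray a : smooth (spray L ginv a).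
Proof.
apply: smooth_scal; apply: smooth_sumI => d; apply: smooth_mul => //.
apply: smooth_sub; last exact: smooth_Dx.
apply: smooth_sumI => c; apply: smooth_mul; first exact/smooth_Dx/smooth_Dy.
exact: smooth_ycoord.
Qed.

Lemma smooth_Nconn a mu : smooth (N a mu).
Proof. exact/smooth_Dy/smooth_spray. Qed.

Lemma smooth_Berwald a mu nu : smooth (B a mu nu).
Proof. exact/smooth_Dy/smooth_Nconn. Qed.

Lemma smooth_Ddelta mu F : smooth F -> smooth (Dl mu F).
Proof.
move=> sF; apply: smooth_sub; first exact: smooth_Dx.
by apply: smooth_sumI => nu; apply: smooth_mul; [apply: smooth_Nconn|apply: smooth_Dy].
Qed.

Lemma gmetC x y a b : onE x y -> g a b x y = g b a x y.
Proof. exact: DyC. Qed.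

Lemma ginv_gmetE x y a c : onE x y -> sumI (fun b => ginv a b x y * g b c x y) = kdelta a c.
Proof. by move=> Exy; have [] := ginv_gmet Exy a c. Qed.

Lemma gmet_ginvE x y a c : onE x y -> sumI (fun b => g a b x y * ginv b c x y) = kdelta a c.
Proof. by move=> Exy; have [] := ginv_gmet Exy a c. Qed.

Lemma ginvC x y a c : onE x y -> ginv a c x y = ginv c a x y.
Proof.
move=> Exy; pose T := fun b e => ginv b a x y * g b e x y * ginv e c x y.
have Tc : sumI (fun b => sumI (fun e => T b e)) = ginv c a x y.
  rewrite -(sumI_kdelta_r c (fun b => ginv b a x y)); apply: eq_sumI => b.
  by rewrite -(gmet_ginvE b c Exy) -sumI_mull; apply: eq_sumI => e; rewrite /T; ring.
have Ta : sumI (fun e => sumI (fun b => T b e)) = ginv a c x y.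
  rewrite -(sumI_kdelta_l a (fun e => ginv e c x y)); apply: eq_sumI => e.
  rewrite kdeltaC -(gmet_ginvE e a Exy) -sumI_mulr; apply: eq_sumI => b.
  by rewrite /T (gmetC _ _ Exy); ring.
by rewrite -Tc -Ta exchange_sumI.
Qed.

(* Differentiating [ginv * g = 1] with any derivation. *)
Lemma derivation_ginv D x y a c : onE x y -> derivation_at D x y ->
  D (ginv a c) x y = - sumI (fun b => sumI (fun e => ginv a b x y * D (g b e) x y * ginv e c x y)).
Proof.
move=> Exy [D_mul D_sum D_const].
have D_row e : sumI (fun b => D (ginv a b) x y * g b e x y) =
               - sumI (fun b => ginv a b x y * D (g b e) x y).
  have := D_const (fun x y => sumI (fun b => ginv a b x y * g b e x y)) (kdelta a e)
    (fun x' y' Exy' => ginv_gmetE a e Exy').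
  rewrite D_sum; last by move=> b; apply: smooth_mul (ginv_smooth a b) (smooth_gmet b e).
  under eq_sumI => b do rewrite (D_mul _ _ (ginv_smooth a b) (smooth_gmet b e)).
  by rewrite sumI_add; lra.
rewrite -(sumI_kdelta_r c (fun b => D (ginv a b) x y)).
under eq_sumI => b do rewrite -(gmet_ginvE b c Exy) -sumI_mull.
rewrite exchange_sumI [in RHS]exchange_sumI -sumI_opp; apply: eq_sumI => e.
have -> : sumI (fun b => D (ginv a b) x y * (g b e x y * ginv e c x y)) =
          sumI (fun b => D (ginv a b) x y * g b e x y) * ginv e c x y.
  by rewrite -sumI_mulr; apply: eq_sumI => b; ring.
rewrite D_row -sumI_opp -sumI_mulr -sumI_opp; apply: eq_sumI => b; ring.
Qed.

Lemma derivation_Ddelta mu x y : onE x y -> derivation_at (Dl mu) x y.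
Proof.
move=> Exy; split=> [F G sF sG|Fs sFs|F k Fk]; rewrite /Ddelta.
- rewrite Dx_mul //; under eq_sumI => nu do rewrite Dy_mul //.
  have -> : sumI (fun nu => N nu mu x y * (Dy nu F x y * G x y + F x y * Dy nu G x y)) =
      sumI (fun nu => N nu mu x y * Dy nu F x y) * G x y +
      F x y * sumI (fun nu => N nu mu x y * Dy nu G x y).
    by rewrite -sumI_mulr -sumI_mull -sumI_add; apply: eq_sumI => nu; ring.
  ring.
- have -> : sumI (fun nu => N nu mu x y * Dy nu (fun x y => sumI (fun i => Fs i x y)) x y) =
      sumI (fun i => sumI (fun nu => N nu mu x y * Dy nu (Fs i) x y)).
    by rewrite exchange_sumI; apply: eq_sumI => nu; rewrite Dy_sumI // sumI_mull.
  by rewrite Dx_sumI // sumI_sub.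
- have D0 d : Dpar d F x y = 0 by case: (derivation_Dpar d Exy) => _ _ /(_ F k Fk).
  rewrite (D0 (false, mu) : Dx mu F x y = 0) sumI_eq0 => [|nu]; first ring.
  by rewrite (D0 (true, nu) : Dy nu F x y = 0); ring.
Qed.

Lemma Dy_ginv mu x y a c : onE x y ->
  Dy mu (ginv a c) x y =
  - sumI (fun b => sumI (fun e => ginv a b x y * Dy mu (g b e) x y * ginv e c x y)).
Proof. by move=> Exy; apply: derivation_ginv (derivation_Dpar (true, mu) Exy). Qed.

Lemma Ddelta_ginv mu x y a c : onE x y ->
  Dl mu (ginv a c) x y =
  - sumI (fun b => sumI (fun e => ginv a b x y * Dl mu (g b e) x y * ginv e c x y)).
Proof. by move=> Exy; apply: derivation_ginv (derivation_Ddelta mu Exy). Qed.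

Lemma onE_scale x y lam : onE x y -> 0 < lam -> onE x (fun i => lam * y i).
Proof.
move=> [Ux [i yi]] lam_gt0; split=> //; exists i.
by apply: Rmult_integral_contrapositive; split; lra.
Qed.

Lemma Dy_L_homog s x y lam : onE x y -> 0 < lam ->
  Dy s L x (fun i => lam * y i) = lam * Dy s L x y.
Proof.
move=> Exy lam_gt0; have Exy' := onE_scale Exy lam_gt0.
have [del [del_gt0 Edel]] := onE_shift (true, s) Exy.
have upd_scale t : (fun i => lam * upd y s t i) = upd (fun i => lam * y i) s (lam * t).
  by apply: functional_extensionality => i; rewrite /upd; case: (i == s); ring.
apply: (Rmult_eq_reg_l lam); last lra.
transitivity (lam ^ 2 * Dy s L x y); last ring.
apply: (uniqueness_limite (fun t => lam ^ 2 * L x (upd y s t)) 0).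
  have := derivable_pt_lim_scale lam (smooth_derivable (true, s) L_smooth Exy').
  apply: derivable_pt_lim_loc del_gt0 _ => t; rewrite Rminus_0_r => t_del.
  by rewrite /evp /= -upd_scale L_homog //; apply: (Edel t t_del).
have := derivable_pt_lim_mult _ _ _ _ _ (derivable_pt_lim_const (lam ^ 2) 0)
  (smooth_derivable (true, s) L_smooth Exy).
by rewrite Rmult_0_l Rplus_0_l.
Qed.

Lemma Dx_L_homog c x y lam : onE x y -> 0 < lam ->
  Dx c L x (fun i => lam * y i) = lam ^ 2 * Dx c L x y.
Proof.
move=> Exy lam_gt0; have Exy' := onE_scale Exy lam_gt0.
have [del [del_gt0 Edel]] := onE_shift (false, c) Exy.
apply: (uniqueness_limite (fun t => lam ^ 2 * L (upd x c t) y) 0).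
  apply: derivable_pt_lim_loc del_gt0 _ (smooth_derivable (false, c) L_smooth Exy') => t.
  by rewrite Rminus_0_r => t_del; rewrite /evp /= L_homog //; apply: (Edel t t_del).
have := derivable_pt_lim_mult _ _ _ _ _ (derivable_pt_lim_const (lam ^ 2) 0)
  (smooth_derivable (false, c) L_smooth Exy).
by rewrite /Dpar /= Rmult_0_l Rplus_0_l.
Qed.

Lemma Euler_Dy_L s x y : onE x y -> sumI (fun a => y a * Dy a (Dy s L) x y) = Dy s L x y.
Proof.
move=> Exy; rewrite (Euler_homogeneous (k := 1) (smooth_Dy s L_smooth) Exy) /=; first ring.
by move=> lam lam_gt0; rewrite Dy_L_homog //; ring.
Qed.

Lemma Euler_Dx_L c x y : onE x y -> sumI (fun a => y a * Dy a (Dx c L) x y) = 2 * Dx c L x y.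
Proof.
move=> Exy; rewrite (Euler_homogeneous (k := 2) (smooth_Dx c L_smooth) Exy) //.
by move=> lam lam_gt0; rewrite Dx_L_homog.
Qed.

Definition spray_rhs b : Fn n :=
  fun x y => sumI (fun c => Dx c (Dy b L) x y * y c) - Dx b L x y.

Lemma gmet_spray e x y : onE x y ->
  sumI (fun a => g e a x y * spray L ginv a x y) = / 2 * spray_rhs e x y.
Proof.
move=> Exy; rewrite -(sumI_kdelta_l e (fun b => spray_rhs b x y)) -sumI_mull.
under eq_sumI => a do rewrite /spray -sumI_mull -sumI_mull.
rewrite exchange_sumI; apply: eq_sumI => b; rewrite -(gmet_ginvE e b Exy) -!sumI_mulr -sumI_mull.
by apply: eq_sumI => a; rewrite /spray_rhs; ring.
Qed.

Lemma Dy_L_gmet s x y : onE x y -> Dy s L x y = sumI (fun a => g s a x y * y a).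
Proof.
move=> Exy; rewrite -Euler_Dy_L //; apply: eq_sumI => a.
by rewrite (gmetC _ _ Exy) /gmet; ring.
Qed.

Lemma spray_Dy_L x y : onE x y ->
  sumI (fun s => spray L ginv s x y * Dy s L x y) = / 2 * sumI (fun c => y c * Dx c L x y).
Proof.
move=> Exy.
have -> : sumI (fun s => spray L ginv s x y * Dy s L x y) =
    sumI (fun a => / 2 * spray_rhs a x y * y a).
  under eq_sumI => s do rewrite Dy_L_gmet // -sumI_mull.
  rewrite exchange_sumI; apply: eq_sumI => a; rewrite -gmet_spray // -sumI_mulr.
  by apply: eq_sumI => s; rewrite (gmetC _ _ Exy); ring.
have yDxDy : sumI (fun a => sumI (fun c => Dx c (Dy a L) x y * y c) * y a) =
             sumI (fun c => y c * (2 * Dx c L x y)).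
  under eq_sumI => a do rewrite -sumI_mulr.
  rewrite exchange_sumI; apply: eq_sumI => c; rewrite -Euler_Dx_L // -sumI_mull.
  by apply: eq_sumI => a; rewrite (Dy_DxC _ _ L_smooth Exy); ring.
have -> : sumI (fun a => / 2 * spray_rhs a x y * y a) =
    / 2 * (sumI (fun a => sumI (fun c => Dx c (Dy a L) x y * y c) * y a) -
           sumI (fun a => y a * Dx a L x y)).
  by rewrite -sumI_sub -sumI_mull; apply: eq_sumI => a; rewrite /spray_rhs; ring.
rewrite yDxDy (eq_sumI (G := fun c => 2 * (y c * Dx c L x y))) ?sumI_mull => [|c]; ring.
Qed.

(* Differentiate [spray_Dy_L] in [y^e]. *)
Lemma Ddelta_L e x y : onE x y -> Dl e L x y = 0.
Proof.
move=> Exy.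
have := Dy_loc e (F := fun x y => sumI (fun s => spray L ginv s x y * Dy s L x y))
  (G := fun x y => / 2 * sumI (fun c => y c * Dx c L x y)) Exy spray_Dy_L.
have sDyL s : smooth (Dy s L) by apply: smooth_Dy.
have sDxL c : smooth (Dx c L) by apply: smooth_Dx.
have -> : Dy e (fun x y => sumI (fun s => spray L ginv s x y * Dy s L x y)) x y =
    sumI (fun s => N s e x y * Dy s L x y) + / 2 * spray_rhs e x y.
  rewrite Dy_sumI //; last by move=> s; apply: smooth_mul (smooth_spray s) (sDyL s).
  rewrite -(gmet_spray e Exy) -sumI_add; apply: eq_sumI => s.
  by rewrite (Dy_mul e (smooth_spray s) (sDyL s) Exy) /Nconn /gmet; ring.
have -> : Dy e (fun x y => / 2 * sumI (fun c => y c * Dx c L x y)) x y =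
    / 2 * (Dx e L x y + sumI (fun c => y c * Dx c (Dy e L) x y)).
  have sy c : smooth (fun x y => y c * Dx c L x y) by apply: smooth_mul (smooth_ycoord c) (sDxL c).
  rewrite Dy_scal ?Dy_sumI //; last exact: smooth_sumI.
  rewrite -(sumI_kdelta_r e (fun c => Dx c L x y)) -sumI_add; congr (_ * _); apply: eq_sumI => c.
  by rewrite (Dy_mul e (smooth_ycoord c) (sDxL c) Exy) Dy_ycoord (Dy_DxC _ _ L_smooth Exy); ring.
rewrite /Ddelta /spray_rhs (eq_sumI (F := fun c => y c * Dx c (Dy e L) x y)
  (G := fun c => Dx c (Dy e L) x y * y c)) => [|c]; [lra|ring].
Qed.

Lemma Dy_Dx_L b c x y : onE x y ->
  Dy b (Dx c L) x y = sumI (fun s => B s c b x y * Dy s L x y + N s c x y * g b s x y).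
Proof.
move=> Exy; have sNDyL s : smooth (fun x y => N s c x y * Dy s L x y).
  by apply: smooth_mul; [apply: smooth_Nconn|apply: smooth_Dy].
have := Dy_loc b (F := Dl c L) (G := fun _ _ => 0) Exy (Ddelta_L c).
rewrite Dy_const /Ddelta Dy_sub //; [|exact: smooth_Dx|exact: smooth_sumI].
rewrite Dy_sumI // => /Rminus_diag_uniq ->.
apply: eq_sumI => s; rewrite (Dy_mul b (smooth_Nconn s c) (smooth_Dy s L_smooth) Exy).
by rewrite /Berwald /gmet; ring.
Qed.

Definition cov_gmet a b c : Fn n := fun x y =>
  Dl c (g a b) x y - sumI (fun s => B s c b x y * g a s x y + B s c a x y * g b s x y).

Lemma Dy_gmet a b s x y : onE x y -> Dy a (g b s) x y = Dy s (g a b) x y.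
Proof.
move=> Exy; rewrite (Dy_loc a (G := g s b) Exy) => [|x' y' /gmetC //].
exact: DyC (smooth_Dy b L_smooth) Exy.
Qed.

(* Differentiate [Dy_Dx_L], that is [∂_b δ_c L = 0], once more in [y^a]. *)
Lemma cov_gmetE a b c x y : onE x y ->
  cov_gmet a b c x y = sumI (fun s => Dy a (B s c b) x y * Dy s L x y).
Proof.
move=> Exy; have sBDyL s : smooth (fun x y => B s c b x y * Dy s L x y).
  by apply: smooth_mul; [apply: smooth_Berwald|apply: smooth_Dy].
have sNg s : smooth (fun x y => N s c x y * g b s x y).
  by apply: smooth_mul; [apply: smooth_Nconn|apply: smooth_gmet].
have := Dy_loc a (F := Dy b (Dx c L))
  (G := fun x y => sumI (fun s => B s c b x y * Dy s L x y + N s c x y * g b s x y))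
  Exy (Dy_Dx_L b c).
rewrite Dy_sumI => [|s|//]; last exact: smooth_add.
have -> : Dy a (Dy b (Dx c L)) x y = Dx c (g a b) x y.
  rewrite (Dy_loc a (G := Dx c (Dy b L)) Exy) => [|x' y']; last exact: Dy_DxC.
  exact: Dy_DxC (smooth_Dy b L_smooth) Exy.
rewrite /cov_gmet /Ddelta => ->; rewrite -!sumI_sub; apply: eq_sumI => s.
rewrite Dy_add // (Dy_mul a (smooth_Berwald s c b) (smooth_Dy s L_smooth) Exy).
rewrite (Dy_mul a (smooth_Nconn s c) (smooth_gmet b s) Exy) Dy_gmet //.
by rewrite /Berwald /gmet; ring.
Qed.

Lemma BerwaldC s b c x y : onE x y -> B s c b x y = B s b c x y.
Proof. by move=> Exy; apply: DyC (smooth_spray s) Exy. Qed.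

Lemma cov_gmetC12 a b c x y : onE x y -> cov_gmet a b c x y = cov_gmet b a c x y.
Proof.
move=> Exy; rewrite !cov_gmetE //; apply: eq_sumI => s.
by rewrite (DyC _ _ (smooth_Nconn s c) Exy).
Qed.

Lemma cov_gmetC23 a b c x y : onE x y -> cov_gmet a b c x y = cov_gmet a c b x y.
Proof.
move=> Exy; rewrite !cov_gmetE //; apply: eq_sumI => s.
by rewrite (Dy_loc a (G := B s b c) Exy) // => x' y' /BerwaldC.
Qed.

Lemma gmet_Chern s b c x y : onE x y ->
  sumI (fun a => g s a x y * Gam a b c x y) =
  / 2 * (Dl b (g s c) x y + Dl c (g s b) x y - Dl s (g b c) x y).
Proof.
move=> Exy; pose V t := Dl b (g t c) x y + Dl c (g t b) x y - Dl t (g b c) x y.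
rewrite -/(V s) -(sumI_kdelta_l s V) -sumI_mull; under eq_sumI => a do rewrite /Chern -!sumI_mull.
rewrite exchange_sumI; apply: eq_sumI => t; rewrite -(gmet_ginvE s t Exy) -!sumI_mulr -sumI_mull.
by apply: eq_sumI => a; rewrite /V; ring.
Qed.

Lemma gmet_Landsberg s b c x y : onE x y ->
  sumI (fun a => g s a x y * Landsberg L ginv a b c x y) = - / 2 * cov_gmet s b c x y.
Proof.
move=> Exy; rewrite /Landsberg.
under eq_sumI => a do rewrite Rmult_minus_distr_l.
rewrite sumI_sub gmet_Chern //.
have Dl_cov a' b' c' : Dl c' (g a' b') x y = cov_gmet a' b' c' x y +
    sumI (fun t => B t c' b' x y * g a' t x y + B t c' a' x y * g b' t x y).
  by rewrite /cov_gmet; ring.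
rewrite !Dl_cov (cov_gmetC23 s c b Exy) (cov_gmetC23 b c s Exy) (cov_gmetC12 b s c Exy).
have E : sumI (fun t => B t b c x y * g s t x y + B t b s x y * g c t x y) +
          sumI (fun t => B t c b x y * g s t x y + B t c s x y * g b t x y) -
          sumI (fun t => B t s c x y * g b t x y + B t s b x y * g c t x y) =
          2 * sumI (fun a => g s a x y * B a b c x y).
  rewrite -sumI_add -sumI_sub -sumI_mull; apply: eq_sumI => t.
  by rewrite (BerwaldC t c b Exy) (BerwaldC t b s Exy) (BerwaldC t c s Exy); ring.
lra.
Qed.

Lemma LandsbergE a b c x y : onE x y ->
  Landsberg L ginv a b c x y = - / 2 * sumI (fun t => ginv a t x y * cov_gmet t b c x y).
Proof.
move=> Exy; rewrite -(sumI_kdelta_l a (fun s => Landsberg L ginv s b c x y)).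
under eq_sumI => s do rewrite -(ginv_gmetE a s Exy) -sumI_mulr.
rewrite exchange_sumI -sumI_mull; apply: eq_sumI => t.
have -> : - / 2 * (ginv a t x y * cov_gmet t b c x y) =
    ginv a t x y * (- / 2 * cov_gmet t b c x y) by ring.
by rewrite -gmet_Landsberg // -sumI_mull; apply: eq_sumI => s; ring.
Qed.

Lemma JupE a x y : onE x y ->
  Jup L ginv a x y =
  sumI (fun mu => sumI (fun nu => ginv mu nu x y * Landsberg L ginv a nu mu x y)).
Proof.
move=> Exy; rewrite /Jup /Jlow.
transitivity (sumI (fun b => sumI (fun mu => sumI (fun t =>
   - / 2 * (ginv a b x y * ginv mu t x y * cov_gmet b t mu x y))))).
  apply: eq_sumI => b; rewrite -sumI_mull; apply: eq_sumI => mu.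
  rewrite LandsbergE // -!sumI_mull; apply: eq_sumI => t.
  by rewrite (cov_gmetC12 t b mu Exy); ring.
rewrite exchange_sumI; apply: eq_sumI => mu; rewrite exchange_sumI; apply: eq_sumI => t.
by rewrite LandsbergE // -!sumI_mull; apply: eq_sumI => b; ring.
Qed.

Lemma Ddelta_loc mu F F' x y : onE x y -> (forall x' y', onE x' y' -> F x' y' = F' x' y') ->
  Dl mu F x y = Dl mu F' x y.
Proof.
move=> Exy FF'; rewrite /Ddelta (Dx_loc mu Exy FF'); congr (_ - _).
by apply: eq_sumI => nu; rewrite (Dy_loc nu Exy FF').
Qed.

Lemma Ddelta_gmet c b e x y : onE x y ->
  Dl c (g b e) x y = sumI (fun s => g b s x y * Gam s e c x y + g e s x y * Gam s b c x y).
Proof.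
move=> Exy; rewrite sumI_add !gmet_Chern // (Ddelta_loc c (F := g e b) (F' := g b e) Exy).
  by lra.
by move=> x' y' /gmetC.
Qed.

Lemma Ddelta_ginvE mu a c x y : onE x y ->
  Dl mu (ginv a c) x y =
  - sumI (fun e => Gam a e mu x y * ginv e c x y + ginv a e x y * Gam c e mu x y).
Proof.
move=> Exy; rewrite Ddelta_ginv //; congr (- _).
under eq_sumI => b do under eq_sumI => e do rewrite Ddelta_gmet //.
have first_term : sumI (fun b => sumI (fun e => ginv a b x y *
      sumI (fun s => g b s x y * Gam s e mu x y) * ginv e c x y)) =
    sumI (fun e => Gam a e mu x y * ginv e c x y).
  rewrite exchange_sumI; apply: eq_sumI => e.
  transitivity (sumI (fun s => kdelta a s * Gam s e mu x y) * ginv e c x y); last first.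
    by rewrite sumI_kdelta_l.
  rewrite -sumI_mulr; under [in RHS]eq_sumI => s do rewrite -(ginv_gmetE a s Exy) -!sumI_mulr.
  rewrite [in RHS]exchange_sumI; apply: eq_sumI => b; rewrite -sumI_mull -sumI_mulr.
  by apply: eq_sumI => s; ring.
have second_term : sumI (fun b => sumI (fun e => ginv a b x y *
      sumI (fun s => g e s x y * Gam s b mu x y) * ginv e c x y)) =
    sumI (fun b => ginv a b x y * Gam c b mu x y).
  apply: eq_sumI => b.
  transitivity (ginv a b x y * sumI (fun s => Gam s b mu x y * kdelta s c)); last first.
    by rewrite sumI_kdelta_r.
  rewrite -sumI_mull; under [in RHS]eq_sumI => s do rewrite -(gmet_ginvE s c Exy) -!sumI_mull.
  rewrite [in RHS]exchange_sumI; apply: eq_sumI => e; rewrite -sumI_mull -sumI_mulr.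
  by apply: eq_sumI => s; rewrite (gmetC _ _ Exy); ring.
rewrite sumI_add -first_term -second_term -sumI_add; apply: eq_sumI => b.
by rewrite -sumI_add; apply: eq_sumI => e; rewrite sumI_add; ring.
Qed.

Lemma sumI_Dy_ginv mu x y : onE x y ->
  sumI (fun nu => Dy nu (ginv nu mu) x y) = - 2 * Iup L ginv mu x y.
Proof.
move=> Exy; under eq_sumI => nu do rewrite Dy_ginv //.
have -> : sumI (fun nu => - sumI (fun b => sumI (fun e =>
      ginv nu b x y * Dy nu (g b e) x y * ginv e mu x y))) =
    - sumI (fun e => 2 * Ilow L ginv e x y * ginv e mu x y).
  rewrite sumI_opp; congr (- _); under eq_sumI => nu do rewrite exchange_sumI.
  rewrite exchange_sumI; apply: eq_sumI => e.
  rewrite /Ilow /Cartan -sumI_mull -sumI_mulr; apply: eq_sumI => nu.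
  by rewrite -!sumI_mull -sumI_mulr; apply: eq_sumI => b; field.
rewrite /Iup -sumI_mull -sumI_opp; apply: eq_sumI => e.
by rewrite (ginvC _ _ Exy); ring.
Qed.

Section Gradient.
Variable f : Fn n.
Hypothesis f_smooth : smooth f.
Local Notation Z := (gradV ginv f).

Lemma Ddelta_gradV a x y : onE x y ->
  Dl a (Z a) x y + sumI (fun mu => Gam a mu a x y * Z mu x y) =
  sumI (fun nu => ginv a nu x y *
    (Dl a (Dy nu f) x y - sumI (fun b => Gam b nu a x y * Dy b f x y))).
Proof.
move=> Exy; have [D_mul D_sum _] := derivation_Ddelta a Exy.
have sZ nu : smooth (fun x y => ginv a nu x y * Dy nu f x y).
  exact: smooth_mul (ginv_smooth a nu) (smooth_Dy nu f_smooth).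
rewrite /gradV D_sum //.
under eq_sumI => nu do
  rewrite (D_mul _ _ (ginv_smooth a nu) (smooth_Dy nu f_smooth)) Ddelta_ginvE //.
have div_term : sumI (fun nu => sumI (fun e => Gam a e a x y * ginv e nu x y) * Dy nu f x y) =
    sumI (fun mu => Gam a mu a x y * sumI (fun nu => ginv mu nu x y * Dy nu f x y)).
  under eq_sumI => nu do rewrite -sumI_mulr.
  by rewrite exchange_sumI; apply: eq_sumI => e; rewrite -sumI_mull; apply: eq_sumI => nu; ring.
have Chern_term : sumI (fun nu => sumI (fun e => ginv a e x y * Gam nu e a x y) * Dy nu f x y) =
    sumI (fun nu => ginv a nu x y * sumI (fun b => Gam b nu a x y * Dy b f x y)).
  under eq_sumI => nu do rewrite -sumI_mulr.
  by rewrite exchange_sumI; apply: eq_sumI => e; rewrite -sumI_mull; apply: eq_sumI => nu; ring.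
rewrite -div_term.
under [in RHS]eq_sumI => nu do rewrite Rmult_minus_distr_l.
rewrite sumI_sub -Chern_term -sumI_add -!sumI_sub; apply: eq_sumI => nu.
by rewrite sumI_add; ring.
Qed.

Lemma Dy_Ddelta nu mu x y : onE x y ->
  Dy nu (Dl mu f) x y = Dl mu (Dy nu f) x y - sumI (fun s => B s mu nu x y * Dy s f x y).
Proof.
move=> Exy; have sNDf s : smooth (fun x y => N s mu x y * Dy s f x y).
  exact: smooth_mul (smooth_Nconn s mu) (smooth_Dy s f_smooth).
rewrite /Ddelta Dy_sub //; [|exact: smooth_Dx|exact: smooth_sumI].
rewrite Dy_sumI // (Dy_DxC _ _ f_smooth Exy) -Rminus_plus_distr -sumI_add; congr (_ - _).
apply: eq_sumI => s; rewrite (Dy_mul nu (smooth_Nconn s mu) (smooth_Dy s f_smooth) Exy).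
by rewrite (DyC _ _ f_smooth Exy) /Berwald; ring.
Qed.

Lemma Dy_ginv_Ddelta x y : onE x y ->
  sumI (fun nu => Dy nu (fun x y => sumI (fun mu => ginv nu mu x y * Dl mu f x y)) x y) =
  - 2 * sumI (fun mu => Iup L ginv mu x y * Dl mu f x y)
  + sumI (fun mu => sumI (fun nu => ginv mu nu x y * Dl mu (Dy nu f) x y))
  - sumI (fun a => sumI (fun mu => sumI (fun nu =>
      ginv mu nu x y * B a nu mu x y * Dy a f x y))).
Proof.
move=> Exy; have sDf mu : smooth (Dl mu f) by apply: smooth_Ddelta.
have sgDf nu mu : smooth (fun x y => ginv nu mu x y * Dl mu f x y).
  exact: smooth_mul (ginv_smooth nu mu) (sDf mu).
under eq_sumI => nu do rewrite (Dy_sumI nu (sgDf nu) Exy).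
under eq_sumI => nu do under eq_sumI => mu do
  rewrite (Dy_mul nu (ginv_smooth nu mu) (sDf mu) Exy) Dy_Ddelta //.
have trace_term : sumI (fun nu => sumI (fun mu => Dy nu (ginv nu mu) x y * Dl mu f x y)) =
    - 2 * sumI (fun mu => Iup L ginv mu x y * Dl mu f x y).
  rewrite exchange_sumI -sumI_mull; apply: eq_sumI => mu.
  by rewrite sumI_mulr sumI_Dy_ginv //; ring.
have second_term : sumI (fun nu => sumI (fun mu => ginv nu mu x y * Dl mu (Dy nu f) x y)) =
    sumI (fun mu => sumI (fun nu => ginv mu nu x y * Dl mu (Dy nu f) x y)).
  by rewrite exchange_sumI; apply: eq_sumI => mu; apply: eq_sumI => nu; rewrite (ginvC _ _ Exy).
have Berwald_term : sumI (fun nu => sumI (fun mu => ginv nu mu x y *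
      sumI (fun s => B s mu nu x y * Dy s f x y))) =
    sumI (fun a => sumI (fun mu => sumI (fun nu =>
      ginv mu nu x y * B a nu mu x y * Dy a f x y))).
  under eq_sumI => nu do under eq_sumI => mu do rewrite -sumI_mull.
  under eq_sumI => nu do rewrite exchange_sumI.
  rewrite exchange_sumI; apply: eq_sumI => a; apply: eq_sumI => nu.
  by apply: eq_sumI => mu; ring.
rewrite -trace_term -second_term -Berwald_term -sumI_add -sumI_sub; apply: eq_sumI => nu.
by rewrite -sumI_add -sumI_sub; apply: eq_sumI => mu; ring.
Qed.

Lemma divHC_gradV x y : onE x y ->
  divHC L ginv Z x y = sumI (fun mu => sumI (fun nu => ginv mu nu x y *
    (Dl mu (Dy nu f) x y - sumI (fun a => Gam a nu mu x y * Dy a f x y)))).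
Proof. by move=> Exy; apply: eq_sumI => a; apply: Ddelta_gradV. Qed.

Lemma divHC_gradV_vertical x y : onE x y ->
  divHC L ginv Z x y =
    sumI (fun nu => Dy nu (fun x y => sumI (fun mu => ginv nu mu x y * Dl mu f x y)) x y)
    + 2 * sumI (fun mu => Iup L ginv mu x y * Dl mu f x y)
    + sumI (fun a => Jup L ginv a x y * Dy a f x y).
Proof.
move=> Exy; rewrite Dy_ginv_Ddelta // divHC_gradV //.
set SB := sumI (fun a => sumI (fun mu => sumI (fun nu =>
  ginv mu nu x y * B a nu mu x y * Dy a f x y))).
set SG := sumI (fun mu => sumI (fun nu =>
  ginv mu nu x y * sumI (fun a => Gam a nu mu x y * Dy a f x y))).
have -> : sumI (fun a => Jup L ginv a x y * Dy a f x y) = SB - SG.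
  have -> : SG = sumI (fun a => sumI (fun mu => sumI (fun nu =>
      ginv mu nu x y * Gam a nu mu x y * Dy a f x y))).
    rewrite exchange_sumI; apply: eq_sumI => mu; rewrite exchange_sumI; apply: eq_sumI => nu.
    by rewrite -sumI_mull; apply: eq_sumI => a; ring.
  rewrite -sumI_sub; apply: eq_sumI => a; rewrite JupE // -sumI_mulr -sumI_sub.
  apply: eq_sumI => mu; rewrite -sumI_mulr -sumI_sub; apply: eq_sumI => nu.
  by rewrite /Landsberg; ring.
have -> : sumI (fun mu => sumI (fun nu => ginv mu nu x y *
      (Dl mu (Dy nu f) x y - sumI (fun a => Gam a nu mu x y * Dy a f x y)))) =
    sumI (fun mu => sumI (fun nu => ginv mu nu x y * Dl mu (Dy nu f) x y)) - SG.
  by rewrite -sumI_sub; apply: eq_sumI => mu; rewrite -sumI_sub; apply: eq_sumI => nu; ring.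
ring.
Qed.

End Gradient.

End Finsler.

End Coordinates.

Unset Implicit Arguments.

Theorem mainTheorem7 (n : nat) (U : ('I_n -> R) -> Prop) (L : Fn n)
    (ginv : 'I_n -> 'I_n -> Fn n) (f : Fn n) :
  chart_open U ->
  smooth_on U L ->
  pos_homog2 U L ->
  (forall a b, smooth_on U (ginv a b)) ->
  (forall x y, onE U x y -> forall a c,
     sumI (fun b => ginv a b x y * gmet L b c x y) = kdelta a c /\
     sumI (fun b => gmet L a b x y * ginv b c x y) = kdelta a c) ->
  smooth_on U f ->
  forall x y, onE U x y ->
    divHC L ginv (gradV ginv f) x y =
      sumI (fun mu => sumI (fun nu => ginv mu nu x y *
        (Ddelta L ginv mu (Dy nu f) x y
         - sumI (fun a => Chern L ginv a nu mu x y * Dy a f x y)))) /\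
    divHC L ginv (gradV ginv f) x y =
      sumI (fun nu => Dy nu (fun x' y' =>
              sumI (fun mu => ginv nu mu x' y' * Ddelta L ginv mu f x' y')) x y)
      + 2 * sumI (fun mu => Iup L ginv mu x y * Ddelta L ginv mu f x y)
      + sumI (fun a => Jup L ginv a x y * Dy a f x y).
Proof.
move=> U_open L_smooth L_homog ginv_smooth ginv_gmet f_smooth x y Exy.
split; first exact: (divHC_gradV U_open L_smooth ginv_smooth ginv_gmet f_smooth Exy).
exact: (divHC_gradV_vertical U_open L_smooth L_homog ginv_smooth ginv_gmet f_smooth Exy).
Qed.
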